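(* Sacks forcing $\mathbb{S}$ is weighted: for every $T\in\mathbb{S}$ there is a weight $\rho$ on $T$ such that every tree $S$ with $S\le_\rho T$ belongs to $\mathbb{S}$.
   Context: Sacks forcing $\mathbb{S}$ is the set of all perfect subtrees of $2^{<\omega}$ (trees in which every node has two incomparable extensions) ordered by inclusion. For a tree $T$ and $s\in T$, $T_s=\{t\in T:t\subseteq s\text{ or }s\subseteq t\}$. A weight on a perfect tree $T$ is a map $\rho:T\times T\to[T]^{<\omega}$ with $\rho(s,t)\subseteq T_s\setminus T_t$ for all $s,t\in T$. For a tree $S$, $S\le_\rho T$ means $S\subseteq T$ and the set of $s_0\in S$ for which there is an injective sequence $(s_n)_{n\in\omega}$ in $S_{s_0}$ (starting at $s_0$) with $\rho(s_n,s_{n+1})\subseteq S$ for all $n$ is dense in $S$. *)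

From mathcomp Require Import all_boot.
Set Implicit Arguments. Unset Strict Implicit. Unset Printing Implicit Defensive.

(* Nodes of 2^{<omega} are finite binary sequences [seq bool];
   [prefix s t] (from seq.v) means s is an initial segment of t, i.e. s ⊆ t
   as functions. *)

Definition node := seq bool.
Definition bset := node -> Prop.

Definition is_tree (T : bset) : Prop :=
  (exists s, T s) /\ (forall s t, prefix s t -> T t -> T s).

Definition incomparable (s t : node) : Prop :=
  ~~ prefix s t /\ ~~ prefix t s.

Definition perfect (T : bset) : Prop :=
  is_tree T /\
  forall s, T s -> exists t u, [/\ T t, T u, prefix s t, prefix s u & incomparable t u].

Definition Sacks (T : bset) : Prop := perfect T.

Definition cone (T : bset) (s : node) : bset :=
  fun t => T t /\ (prefix t s || prefix s t).

(* A weight on T: rho(s,t) is a finite subset of T_s \ T_t for s,t in T.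
   Finite subsets are represented by finite lists. *)
Definition weight (T : bset) (rho : node -> node -> seq node) : Prop :=
  forall s t, T s -> T t ->
    forall x, x \in rho s t -> cone T s x /\ ~ cone T t x.

Definition rho_good (rho : node -> node -> seq node) (S : bset) (s0 : node) : Prop :=
  S s0 /\
  exists f : nat -> node,
    [/\ injective f, f 0 = s0, (forall n, cone S s0 (f n))
      & forall n x, x \in rho (f n) (f n.+1) -> S x].

Definition dense_in (S D : bset) : Prop :=
  forall s, S s -> exists t, prefix s t /\ D t.

Definition le_rho (rho : node -> node -> seq node) (S T : bset) : Prop :=
  (forall s, S s -> T s) /\ dense_in S (rho_good rho S).

(* The weight of a perfect tree T sends (s, t) to the nodes of T above s
   that branch off t, i.e. the siblings [sibling t k] of the nodes along t.
   Let S <=_rho T, s in S, and pick s0 above s with an injective sequence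
   (f n) in S_{s0}, f 0 = s0, such that rho (f n) (f n.+1) is included in S.
   Above s0 there is a splitting node c of T.  Only finitely many nodes are
   prefixes of c, so some step f m -> f m.+1 leaves them; f m.+1 extends s0
   and branches off c at some node x which is below c or a child of c, hence
   x is in T.  Either f m is below the parent of x, and then x lies in
   rho (f m) (f m.+1), hence in S; or x is a prefix of f m.  Either way some
   node of S above x is incomparable with f m.+1, so s splits in S. *)

From mathcomp Require Import all_boot boolp.
Set Implicit Arguments. Unset Strict Implicit. Unset Printing Implicit Defensive.

Lemma prefix_shorter (T : eqType) (a e c : seq T) :
  prefix a c -> prefix e c -> size a <= size e -> prefix a e.
Proof.
rewrite !(prefixE _ c) => /eqP ac /eqP ec le_ae.
by rewrite prefixE -ec take_takel ?ac.
Qed.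

Lemma exists_exit (P : pred nat) n : P 0 -> ~~ P n -> exists m, P m && ~~ P m.+1.
Proof.
elim: n => [|n IHn] P0 nPn; first by rewrite P0 in nPn.
by case Pn: (P n); [exists n; rewrite Pn | exact: IHn (negbT Pn)].
Qed.

Lemma injective_not_prefix (T : eqType) (f : nat -> seq T) c :
  injective f -> exists n, ~~ prefix (f n) c.
Proof.
move=> f_inj; set N := iota 0 (size c).+2.
have [/hasP[n _ ?]|/hasPn N_pre] := boolP (has (fun n => ~~ prefix (f n) c) N).
  by exists n.
have f_take : {subset map f N <= map (take^~ c) (iota 0 (size c).+1)}.
  move=> _ /mapP[n /N_pre /negPn fn_c ->]; apply/mapP; exists (size (f n)).
    by rewrite mem_iota ltnS size_prefix.
  by move: fn_c; rewrite prefixE => /eqP.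
have := uniq_leq_size _ f_take.
by rewrite map_inj_uniq // iota_uniq !size_map !size_iota ltnn => /(_ isT).
Qed.

Lemma injective_exit_prefix (T : eqType) (f : nat -> seq T) c :
  injective f -> prefix (f 0) c -> exists m, prefix (f m) c && ~~ prefix (f m.+1) c.
Proof.
move=> f_inj f0_c; have [n fn_c] := injective_not_prefix c f_inj.
exact: (@exists_exit (fun m => prefix (f m) c) n).
Qed.

Definition sibling (b : node) (k : nat) : node := rcons (take k b) (~~ nth false b k).

Lemma size_sibling b k : k < size b -> size (sibling b k) = k.+1.
Proof. by move=> kb; rewrite size_rcons size_take kb. Qed.

Lemma sibling_not_prefix b k : k < size b -> ~~ prefix (sibling b k) b.
Proof.
move=> kb; rewrite prefixE size_sibling // (take_nth false) // eqseq_rcons eqxx /=.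
by case: nth.
Qed.

Lemma incomparable_sibling b k y :
  k < size b -> prefix (sibling b k) y -> incomparable y b.
Proof.
move=> kb xy; have xb := sibling_not_prefix kb; split; apply/negP => h.
  by rewrite (prefix_trans xy h) in xb.
by rewrite (prefix_shorter xy h) ?size_sibling in xb.
Qed.

Lemma not_prefix_sibling (p b c : node) :
  prefix p b -> prefix p c -> ~~ prefix b c ->
  exists k, [/\ k < size b, prefix p (take k b), prefix (take k b) c
               & take k b = c \/ prefix (sibling b k) c].
Proof.
elim: b p c => [|x b IHb] p [|y c] //.
  by case: p => // _ _ _; exists 0; split => //; left.
have [<-|xy] := eqVneq x y; last first.
  case: p => [|z p] /=; last first.
    by case/andP=> /eqP-> _ /andP[/eqP]; move/eqP: xy.
  by move=> _ _ _; exists 0; split; rewrite //= prefix0s andbT; right; case: x y xy => -[].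
move=> p_xb p_xc; rewrite /= eqxx /= => bc.
have [q_b q_c] : prefix (behead p) b /\ prefix (behead p) c.
  by case: p p_xb p_xc => [|z p] /=; [rewrite !prefix0s | move=> /andP[_ ->] /andP[_ ->]].
have [k [kb q_k k_c k_alt]] := IHb _ _ q_b q_c bc.
exists k.+1; split; rewrite //= ?eqxx //.
  by case: p p_xb q_k {p_xc q_b q_c} => //= z p /andP[->].
by case: k_alt => [->|]; [left | right].
Qed.

Lemma perfect_splitting (T : bset) s :
  perfect T -> T s -> exists2 c, prefix s c & forall j, T (rcons c j).
Proof.
move=> [[_ T_cl] T_perf] Ts; have [t [u [Tt Tu st su [tu ut]]]] := T_perf s Ts.
have [k [kt s_k k_u [k_eq|xu]]] := not_prefix_sibling st su tu.
  by rewrite -k_eq prefix_take in ut.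
exists (take k t) => // j; have [->|/negPf nj] := eqVneq j (nth false t k).
  by apply: T_cl Tt; rewrite -take_nth // prefix_take.
by apply: T_cl Tu; move: xu; rewrite /sibling; case: j nj; case: nth.
Qed.

Definition sibling_weight (T : bset) (a b : node) : seq node :=
  [seq x <- [seq sibling b k | k <- iota 0 (size b)]
     | `[< cone T a x /\ ~ cone T b x >]].

Lemma weight_sibling_weight T : weight T (sibling_weight T).
Proof. by move=> a b _ _ x; rewrite mem_filter => /andP[/asboolP]. Qed.

Lemma mem_sibling_weight T a b k :
  k < size b -> T (sibling b k) -> prefix a (sibling b k) ->
  sibling b k \in sibling_weight T a b.
Proof.
move=> kb Tx ax; rewrite mem_filter map_f ?mem_iota ?andbT //.
apply/asboolP; split; first by rewrite /cone ax orbT.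
have [/negPf xb /negPf bx] := incomparable_sibling kb (prefix_refl (sibling b k)).
by rewrite /cone xb bx; case.
Qed.

Lemma good_node_splits (T S : bset) s0 :
  perfect T -> (forall s, S s -> T s) -> rho_good (sibling_weight T) S s0 ->
  exists y z, [/\ S y, S z, prefix s0 y, prefix s0 z & incomparable y z].
Proof.
move=> T_perf S_T [Ss0 [f [f_inj f0 f_cone f_rho]]].
have T_cl := T_perf.1.2.
have [c s0_c Tc_child] := perfect_splitting T_perf (S_T _ Ss0).
have Tc : T c := T_cl _ _ (prefix_rcons c true) (Tc_child true).
have [|m /andP[fm_c b_c]] := injective_exit_prefix (c := c) f_inj; first by rewrite f0.
have [Sb /orP[b_s0|s0_b]] := f_cone m.+1.
  by rewrite (prefix_trans b_s0 s0_c) in b_c.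
have [k [kb s0_k k_c k_alt]] := not_prefix_sibling s0_b s0_c b_c.
have Tx : T (sibling (f m.+1) k).
  by case: k_alt => [k_eq|x_c]; [rewrite /sibling k_eq | exact: T_cl x_c Tc].
suff [y Sy x_y] : exists2 y, S y & prefix (sibling (f m.+1) k) y.
  exists y, (f m.+1); split=> //; last exact: incomparable_sibling kb x_y.
  exact: prefix_trans s0_k (prefix_trans (prefix_rcons _ _) x_y).
have [Sfm _] := f_cone m.
have [fm_k|fm_nk] := boolP (prefix (f m) (take k (f m.+1))).
  exists (sibling (f m.+1) k); last exact: prefix_refl.
  apply: (f_rho m).
  by apply: mem_sibling_weight => //; apply: prefix_trans fm_k (prefix_rcons _ _).
exists (f m) => //; case: k_alt => [k_eq|x_c]; first by rewrite k_eq fm_c in fm_nk.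
have k_fm : k < size (f m).
  rewrite ltnNge; apply: contra fm_nk => fm_le.
  by apply: (prefix_shorter fm_c k_c); rewrite size_take kb.
by apply: (prefix_shorter x_c fm_c); rewrite size_sibling.
Qed.

Theorem lemma4p12 :
  forall T : bset, Sacks T ->
    exists rho : node -> node -> seq node,
      weight T rho /\
      forall S : bset, is_tree S -> le_rho rho S T -> Sacks S.
Proof.
move=> T T_perf; exists (sibling_weight T); split=> [|S S_tree [S_T S_dense]].
  exact: weight_sibling_weight.
split=> // s Ss; have [s0 [s_s0 s0_good]] := S_dense s Ss.
have [y [z [Sy Sz s0_y s0_z yz]]] := good_node_splits T_perf S_T s0_good.
by exists y, z; split; rewrite ?(prefix_trans s_s0).
Qed.
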